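(* Let $(\tilde X,\tilde Z)$ be $N\times N$ complex matrices with $\mathrm{rank}([\tilde X,\tilde Z]+I)=1$ and $\det(I+\tilde Z)\neq0$. Define $$X=I+\tilde Z^t,\qquad Z=\tilde X^t(I+\tilde Z^t).$$ Then $X$ is invertible and $\mathrm{rank}(XZX^{-1}-Z+I)=1$. Moreover, for the function $$\psi^b(n,z)=(1+z)^n\det\big\{I+\big(\tilde X-n(I+\tilde Z)^{-1}\big)^{-1}(zI-\tilde Z)^{-1}\big\},$$ one has $$\psi^b(z,e^x-1)=e^{xz}\det\big\{I-X(e^xI-X)^{-1}(zI-Z)^{-1}\big\}.$$
   Context: $M^t$ denotes the transpose of a matrix $M$, and $[A,B]=AB-BA$. *)

From HB Require Import structures.
From mathcomp Require Import all_boot all_order all_algebra.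
Set Implicit Arguments. Unset Strict Implicit. Unset Printing Implicit Defensive.
Import Order.TTheory GRing.Theory Num.Theory.
Local Open Scope ring_scope.

Definition mxcomm (C : numClosedFieldType) (N : nat) (A B : 'M[C]_N) : 'M[C]_N :=
  A *m B - B *m A.

(* Determinant factor of psi^b(n,w) = (1+w)^n * psib_det Xt Zt n w, i.e.
   det{ I + (Xt - n (I+Zt)^{-1})^{-1} (w I - Zt)^{-1} }. *)
Definition psib_det (C : numClosedFieldType) (N : nat) (Xt Zt : 'M[C]_N) (n w : C) : C :=
  \det (1%:M + invmx (Xt - n *: invmx (1%:M + Zt)) *m invmx (w%:M - Zt)).

From HB Require Import structures.
From mathcomp Require Import all_boot all_order all_algebra.
Import Order.TTheory GRing.Theory Num.Theory.
Local Open Scope ring_scope.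

(* With A := I + Zt we have X = A^T, so X is invertible, and
   Z = Xt^T X.  Conjugating, X Z X^{-1} = X Xt^T, hence
     X Z X^{-1} - Z + I = [X, Xt^T] + I = [Zt^T, Xt^T] + I = ([Xt, Zt] + I)^T,
   which has the same rank as [Xt, Zt] + I, namely 1.
   For the determinant identity put M := Xt - z A^{-1} and B := (q-1) I - Zt.
   Then q I - X = B^T and z I - Z = -(M^T X), so the general "resolvent"
   identity  I - X P^{-1} (-(Q X))^{-1} = I + P^{-1} Q^{-1}  (valid when X
   commutes with P) turns the right-hand side into det(I + B^{-T} M^{-T}),
   the transpose of the matrix defining psi^b. *)

Section InverseMatrices.
Variables (R : comUnitRingType) (n : nat).
Implicit Types P Q X Y : 'M[R]_n.

Lemma invmx_unique P Q : P *m Q = 1%:M -> invmx P = Q.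
Proof.
move=> PQ; have [uP _] := mulmx1_unit PQ.
by rewrite -[invmx P]mulmx1 -PQ mulmxA mulVmx ?mul1mx.
Qed.

Lemma comm_mx_invmx P Y : P \in unitmx -> comm_mx P Y -> comm_mx (invmx P) Y.
Proof.
move=> uP PY; rewrite /comm_mx.
by rewrite -[LHS](mulmxK uP) -(mulmxA _ Y) -PY !mulmxA mulVmx ?mul1mx.
Qed.

Lemma invmxNM Q X : Q \in unitmx -> X \in unitmx ->
  invmx (- (Q *m X)) = - (invmx X *m invmx Q).
Proof.
move=> uQ uX; apply: invmx_unique.
by rewrite mulNmx mulmxN opprK mulmxA mulmxK ?mulmxV.
Qed.

Lemma resolvent_product X P Q :
  X \in unitmx -> P \in unitmx -> Q \in unitmx -> comm_mx X P ->
  1%:M - X *m invmx P *m invmx (- (Q *m X)) = 1%:M + invmx P *m invmx Q.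
Proof.
move=> uX uP uQ XP.
have XPi : X *m invmx P = invmx P *m X by apply/comm_mx_sym/comm_mx_invmx.
by rewrite invmxNM // XPi mulmxN opprK -mulmxA mulKVmx.
Qed.

End InverseMatrices.

Section TransposedData.
Variables (C : numClosedFieldType) (N : nat).
Implicit Types A B X Y : 'M[C]_N.

Lemma mxcomm_tr A B : (mxcomm A B)^T = mxcomm B^T A^T.
Proof. by rewrite /mxcomm linearB /= !trmx_mul. Qed.

Lemma mxcomm_shiftl (a : C) A B : mxcomm (a%:M + A) B = mxcomm A B.
Proof.
rewrite /mxcomm mulmxDl mulmxDr mul_scalar_mx mul_mx_scalar.
by rewrite opprD addrACA subrr add0r.
Qed.

Lemma conj_sub_eq_comm X Y : X \in unitmx ->
  X *m (Y *m X) *m invmx X - Y *m X + 1%:M = mxcomm X Y + 1%:M.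
Proof. by move=> uX; rewrite mulmxA mulmxK. Qed.

Lemma shift_sub_tr (q : C) A : q%:M - (1%:M + A^T) = ((q - 1)%:M - A)^T.
Proof.
by rewrite linearB /= tr_scalar_mx (raddfB (@scalar_mx C N)) opprD addrA.
Qed.

Lemma spectral_sub_factor (z : C) A Y : A \in unitmx ->
  z%:M - Y^T *m A^T = - ((Y - z *: invmx A)^T *m A^T).
Proof.
move=> uA; rewrite linearB /= linearZ /= trmx_inv mulmxBl -scalemxAl.
by rewrite mulVmx ?unitmx_tr // scalemx1 opprB.
Qed.

End TransposedData.

Theorem mainTheorem9 (C : numClosedFieldType) (N : nat) (Xt Zt : 'M[C]_N) :
  \rank ((mxcomm Xt Zt + 1%:M)%R) = 1%N ->
  \det (1%:M + Zt) != 0 ->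
  let X := 1%:M + Zt^T in
  let Z := Xt^T *m (1%:M + Zt^T) in
  [/\ X \in unitmx,
      \rank ((X *m Z *m invmx X - Z + 1%:M)%R) = 1%N &
      forall (z q : C), q != 0 ->
        (Xt - z *: invmx (1%:M + Zt)) \in unitmx ->
        ((q - 1)%:M - Zt) \in unitmx ->
        (q%:M - X) \in unitmx ->
        (z%:M - Z) \in unitmx ->
        psib_det Xt Zt z (q - 1)
          = \det (1%:M - X *m invmx (q%:M - X) *m invmx (z%:M - Z))].
Proof.
move=> rk detA X Z.
have uA : 1%:M + Zt \in unitmx by rewrite unitmxE unitfE.
have eX : X = (1%:M + Zt)^T by rewrite linearD /= tr_scalar_mx.
have uX : X \in unitmx by rewrite eX unitmx_tr.
split=> //.
  (* X Z X^{-1} - Z + I = [Zt^T, Xt^T] + I = ([Xt, Zt] + I)^T *)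
  rewrite conj_sub_eq_comm // mxcomm_shiftl -mxcomm_tr -rk -mxrank_tr.
  by rewrite linearD /= tr_scalar_mx trmxK.
move=> z q _ uM _ uBt _.
have XP : comm_mx X (q%:M - X) by apply: comm_mxB; [exact: comm_mx_scalar|].
(* z I - Z = -(M^T X), then the resolvent identity with P = q I - X = B^T *)
rewrite /Z -/X eX spectral_sub_factor // -eX.
rewrite resolvent_product ?unitmx_tr // shift_sub_tr.
rewrite /psib_det -det_tr linearD /= tr_scalar_mx trmx_mul.
by rewrite !trmx_inv.
Qed.
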